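(* Let $E$ be a real affine space of dimension $n$ with a system of coordinates $\mathcal L=(\ell_1,\dots,\ell_n)$. Every $\mu\in\mathcal M^*(E)$ has at most one center with respect to $\mathcal L$. Moreover, for $1\le k\le n$, the first $k$ coordinates of the center depend only on the restriction of $\mu$ to $\mathcal B_E(\ell_1,\dots,\ell_k)$: if $\mu,\nu\in\mathcal M^*(E)$ satisfy $\mu(A)=\nu(A)$ for all $A\in\mathcal B_E(\ell_1,\dots,\ell_k)$, and $x$, $y$ are centers with respect to $\mathcal L$ of $\mu$ and $\nu$ respectively, then $(x_1,\dots,x_k)=(y_1,\dots,y_k)$.
   Context: $\vec E$ is the vector space of $E$. A partition of $E$ is a collection of subsets covering $E$ whose distinct members have disjoint interiors. Yao-Yao partitions and their centers are defined by induction on dimension: if $E=\{x\}$, the Yao-Yao partition is $\{\{x\}\}$, with center $x$; if $\dim E=n\ge1$, $\mathcal P$ is a Yao-Yao partition of $E$ with center $x$ if there exist an affine hyperplane $F$, a vector $v\in\vec E\setminus\vec F$ and two Yao-Yao partitions $\mathcal P_1,\mathcal P_{-1}$ of $F$ with the same center $x$ such that $\mathcal P=\{A+\mathbb R_-v: A\in\mathcal P_{-1}\}\cup\{A+\mathbb R_+v: A\in\mathcal P_1\}$. A system of coordinates is a family $(\ell_1,\dots,\ell_n)$ of affine forms such that $x\mapsto(\ell_i(x))_i$ is a bijection $E\to\mathbb R^n$; write $x_i=\ell_i(x)$. Such a partition, given by $F,v,x,\mathcal P_1,\mathcal P_{-1}$, is adapted to $(\ell_1,\dots,\ell_n)$ if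 $F=\{z: z_1=x_1\}$ and $\mathcal P_1,\mathcal P_{-1}$ are adapted to $(\ell_2|_F,\dots,\ell_n|_F)$ (in dimension $0$ every Yao-Yao partition is adapted). $\mathcal M(E)$ is the set of finite non-negative Borel measures on $E$ vanishing on every affine hyperplane; $\mathcal M^*(E)$ is the set of $\mu\in\mathcal M(E)$ with $\mu(U)>0$ for every nonempty open set $U$. A Yao-Yao equipartition for $\mu$ is a Yao-Yao partition $\mathcal P$ with $\mu(A)=2^{-n}\mu(E)$ for all $A\in\mathcal P$. A center of $\mu$ with respect to $\mathcal L$ is the center of a Yao-Yao equipartition for $\mu$ adapted to $\mathcal L$. $\mathcal B_E(\ell_1,\dots,\ell_k)$ is the smallest $\sigma$-algebra of subsets of $E$ making $\ell_1,\dots,\ell_k$ measurable. *)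

From HB Require Import structures.
From mathcomp Require Import all_boot all_order all_algebra.
From mathcomp Require Import all_classical all_reals all_analysis.
Set Implicit Arguments. Unset Strict Implicit. Unset Printing Implicit Defensive.
Import Order.TTheory GRing.Theory Num.Theory numFieldNormedType.Exports.
Local Open Scope classical_set_scope.
Local Open Scope ring_scope.

Section YY.
Variables (R : realType) (n : nat).
Local Notation V := 'rV[R]_n.

Definition Borel_space := g_sigma_algebraType (@open V).

Definition affine_form (f : V -> R) : Prop :=
  forall (x y : V) (t : R), f (t *: x + (1 - t) *: y) = t * f x + (1 - t) * f y.

Definition lin_part (f : V -> R) (v : V) : R := f v - f 0.

Definition coord_system (L : 'I_n -> V -> R) : Prop :=
  (forall i, affine_form (L i)) /\ bijective (fun x : V => \row_i L i x).

Definition cone_neg (A : set V) (v : V) : set V :=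
  [set z | exists a t, A a /\ t <= 0 /\ z = a + t *: v].
Definition cone_pos (A : set V) (v : V) : set V :=
  [set z | exists a t, A a /\ 0 <= t /\ z = a + t *: v].

(** [YYA L x k P]: P is a Yao-Yao partition, with center x, of the affine
    subspace F_k = {z | l_i z = l_i x for all i < k}, adapted to the
    coordinate system (l_k|F_k, ..., l_{n-1}|F_k).  (Indices are 0-based.)
    At step k the hyperplane of F_k is F_{k+1} = {z in F_k | l_k z = l_k x},
    and v ranges over the direction of F_k minus the direction of F_{k+1}. *)
Inductive YYA (L : 'I_n -> V -> R) (x : V) : nat -> set (set V) -> Prop :=
  | YYA_point : YYA L x n [set [set x]]
  | YYA_step (k : 'I_n) (v : V) (P1 Pm1 : set (set V)) :
      (forall i : 'I_n, (i < k)%N -> lin_part (L i) v = 0) ->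
      lin_part (L k) v != 0 ->
      YYA L x k.+1 P1 -> YYA L x k.+1 Pm1 ->
      YYA L x k ([set cone_neg A v | A in Pm1] `|` [set cone_pos A v | A in P1]).

Definition YY_adapted (L : 'I_n -> V -> R) (x : V) (P : set (set V)) : Prop :=
  YYA L x 0 P.

Definition affine_hyperplane (H : set V) : Prop :=
  exists (c : 'cV[R]_n) (b : R), c != 0 /\ H = [set z | (z *m c) 0 0 = b].

Definition in_M (mu : {finite_measure set Borel_space -> \bar R}) : Prop :=
  forall H, affine_hyperplane H -> mu H = 0%E.
Definition in_Mstar (mu : {finite_measure set Borel_space -> \bar R}) : Prop :=
  in_M mu /\ forall U : set V, open U -> U !=set0 -> (0 < mu U)%E.

Definition YY_equipartition (mu : {finite_measure set Borel_space -> \bar R})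
  (P : set (set V)) : Prop :=
  forall A, P A -> mu A = ((2 ^- n)%:E * mu setT)%E.

Definition is_center (mu : {finite_measure set Borel_space -> \bar R})
  (L : 'I_n -> V -> R) (x : V) : Prop :=
  exists P, YY_adapted L x P /\ YY_equipartition mu P.

Definition B_first (L : 'I_n -> V -> R) (k : nat) (hk : (k <= n)%N) : set (set V) :=
  g_sigma_preimage (fun i : 'I_k => L (widen_ord hk i)).

End YY.

From HB Require Import structures.
From mathcomp Require Import all_boot all_order all_algebra.
From mathcomp Require Import all_classical all_reals all_analysis.
From mathcomp Require Import ring lra.
Import Order.TTheory GRing.Theory Num.Theory numFieldNormedType.Exports.
Local Open Scope classical_set_scope.
Local Open Scope ring_scope.
Set Implicit Arguments. Unset Strict Implicit.

(* A Yao-Yao partition adapted to [L] is encoded by a binary tree of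
   directions; its cells are indexed by sign sequences, and the coordinate of
   a point along the [m]-th direction of a cell differs from its [m]-th
   coordinate by a unit triangular change of variables.  An equipartition
   therefore gives each sector (points whose first [j] cell coordinates have
   prescribed signs) mass [2^-j mu(E)].  Let [x], [y] be centres of measures
   agreeing on [B(l_1, ..., l_k)], whose coordinates and direction trees agree
   below level [j < k].  Their sectors of depth [j] then coincide, and the
   difference of their [j]-th cell coordinates is an affine function of the
   previous ones.  Sectors of depth [j + 1] have equal masses and the measures
   charge every nonempty open set, so this function cannot change sign
   between the closed and the open orthants; a greedy choice of signs shows
   that it vanishes identically, i.e. [x_j = y_j] and the trees agree at
   level [j].  Uniqueness of the centre is the case [mu = nu], [k = n]. *)

Lemma set_forall_lt0 (T : Type) (P : nat -> T -> Prop) :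
  [set z | forall m, (m < 0)%N -> P m z] = setT.
Proof. by apply/seteqP; split => // z _ m; rewrite ltn0. Qed.

Lemma set_forall_ltS (T : Type) (P : nat -> T -> Prop) j :
  [set z | forall m, (m < j.+1)%N -> P m z] =
  [set z | forall m, (m < j)%N -> P m z] `&` [set z | P j z].
Proof.
apply/seteqP; split => z.
- by move=> H; split=> [m mj|]; apply: H; rewrite ?ltnS ?leqnn // ltnW.
- move=> [H1 H2] m; rewrite ltnS leq_eqVlt => /orP[/eqP->|]; first exact: H2.
  exact: H1.
Qed.

Definition signed {R : numDomainType} (b : bool) (r : R) : Prop :=
  if b then 0 <= r else r <= 0.

Definition strictly_signed {R : numDomainType} (b : bool) (r : R) : Prop :=
  if b then 0 < r else r < 0.

Definition prefix (q : nat -> bool) (m : nat) : seq bool := mkseq q m.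

Definition qcons (b : bool) (q : nat -> bool) : nat -> bool :=
  fun t => if t is t'.+1 then q t' else b.

Lemma prefix_cons b q m : prefix (qcons b q) m.+1 = b :: prefix q m.
Proof.
elim: m => [//|m IH].
by rewrite /prefix mkseqS -/(prefix _ m.+1) IH rcons_cons -mkseqS.
Qed.

Lemma prefix_eq q q' m : (forall t, (t < m)%N -> q t = q' t) ->
  prefix q m = prefix q' m.
Proof.
move=> H; apply/eq_in_map => t.
by rewrite mem_iota add0n => /andP[_ /H].
Qed.

Section OrthantRigidity.
Variable R : realFieldType.

Definition orthant_sum j (e : seq bool -> R) (q : nat -> bool) (r : nat -> R) :=
  \sum_(t < j) r t * e (prefix q t).

Lemma eq_orthant_sum j e q r r' : (forall t, (t < j)%N -> r t = r' t) ->
  orthant_sum j e q r = orthant_sum j e q r'.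
Proof. by move=> rr'; apply: eq_bigr => t _; rewrite rr'. Qed.

(* [r] ranges over the closed (first hypothesis) and the open (conclusion)
   orthant of sign pattern [q]; the linear part of the affine map depends
   on [q] through the tree [e]. *)
Definition orthant_rigid j (c : R) (e : seq bool -> R) := forall q,
  (forall r, (forall t, (t < j)%N -> signed (q t) (r t)) ->
     0 <= c + orthant_sum j e q r) ->
  forall r, (forall t, (t < j)%N -> strictly_signed (q t) (r t)) ->
    c + orthant_sum j e q r <= 0.

Definition sign_point (q : nat -> bool) : nat -> R :=
  fun t => if q t then 1 else -1.

Lemma sign_point_signed q t : signed (q t) (sign_point q t).
Proof. by rewrite /signed /sign_point; case: (q t); lra. Qed.

Lemma sign_point_strict q t : strictly_signed (q t) (sign_point q t).
Proof. by rewrite /strictly_signed /sign_point; case: (q t); lra. Qed.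

Lemma orthant_sum_cons j e b q r : orthant_sum j.+1 e (qcons b q) r =
  r 0%N * e [::] + orthant_sum j (fun p => e (b :: p)) q (fun t => r t.+1).
Proof.
rewrite /orthant_sum big_ord_recl; congr (_ + _).
by apply: eq_bigr => t _; rewrite prefix_cons.
Qed.

Lemma orthant_sum_ge0_cons j e q :
  (forall r, (forall t, (t < j)%N -> signed (q t) (r t)) ->
     0 <= orthant_sum j (fun p => e ((0 <= e [::]) :: p)) q r) ->
  forall r, (forall t, (t < j.+1)%N -> signed (qcons (0 <= e [::]) q t) (r t)) ->
    0 <= orthant_sum j.+1 e (qcons (0 <= e [::]) q) r.
Proof.
move=> Hq r Hr; rewrite orthant_sum_cons; apply: addr_ge0.
  by have := Hr 0%N isT; rewrite /signed /=; case: lerP => he hr; nra.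
by apply: Hq => t; apply: (Hr t.+1).
Qed.

(* Choosing the sign of each step after that of the current tree node. *)
Lemma greedy_orthant j e : exists q, forall r,
  (forall t, (t < j)%N -> signed (q t) (r t)) -> 0 <= orthant_sum j e q r.
Proof.
elim: j e => [|j IH] e.
  by exists (fun _ => true) => r _; rewrite /orthant_sum big_ord0.
have [q Hq] := IH (fun p => e ((0 <= e [::]) :: p)).
by exists (qcons (0 <= e [::]) q); apply: orthant_sum_ge0_cons.
Qed.

Lemma orthant_rigid_le0 j c e : orthant_rigid j c e -> c <= 0.
Proof.
move=> H; rewrite leNgt; apply/negP => c_gt0.
have [q Hq] := greedy_orthant j e.
have Hpos r : (forall t, (t < j)%N -> signed (q t) (r t)) ->
    0 <= c + orthant_sum j e q r.
  by move=> /Hq; lra.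
have := H q Hpos (sign_point q) (fun t _ => sign_point_strict q t).
have := Hq (sign_point q) (fun t _ => sign_point_signed q t); lra.
Qed.

Lemma orthant_rigid_cons j e b : e [::] = 0 ->
  orthant_rigid j.+1 0 e -> orthant_rigid j 0 (fun p => e (b :: p)).
Proof.
move=> e0 H q Hpos r Hr.
have Hpos' r' : (forall t, (t < j.+1)%N -> signed (qcons b q t) (r' t)) ->
    0 <= 0 + orthant_sum j.+1 e (qcons b q) r'.
  move=> Hr'; rewrite orthant_sum_cons e0 mulr0 add0r.
  by apply: Hpos => t; apply: (Hr' t.+1).
pose r' t := if t is t'.+1 then r t' else sign_point (qcons b q) 0%N.
have Hr' t : (t < j.+1)%N -> strictly_signed (qcons b q t) (r' t).
  by case: t => [_|t /Hr //]; apply: sign_point_strict.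
by have := H _ Hpos' r' Hr'; rewrite orthant_sum_cons e0 mulr0 add0r.
Qed.

Lemma orthant_rigid0_eq0 j e : orthant_rigid j 0 e ->
  forall p, (size p < j)%N -> e p = 0.
Proof.
elim: j e => [|j IH] e H p; first by rewrite ltn0.
have e0 : e [::] = 0.
  have [q Hq] := greedy_orthant j (fun p => e ((0 <= e [::]) :: p)).
  set q0 := qcons (0 <= e [::]) q.
  have Hpos r : (forall t, (t < j.+1)%N -> signed (q0 t) (r t)) ->
      0 <= 0 + orthant_sum j.+1 e q0 r.
    by rewrite add0r; apply: orthant_sum_ge0_cons.
  have := H q0 Hpos (sign_point q0) (fun t _ => sign_point_strict q0 t).
  rewrite add0r orthant_sum_cons.
  have := Hq (sign_point q) (fun t _ => sign_point_signed q t).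
  rewrite /sign_point /q0 /= => T0 T1.
  by have [he|he] := lerP 0 (e [::]); move: T0 T1; rewrite ?he ?(lt_geF he); lra.
case: p => [|b p] hp //.
exact: IH _ (orthant_rigid_cons (b:=b) e0 H) p hp.
Qed.

Lemma orthant_rigid_opp j c e :
  orthant_rigid j c e -> orthant_rigid j (- c) (fun p => - e p) ->
  c = 0 /\ forall p, (size p < j)%N -> e p = 0.
Proof.
move=> H Hopp; have c0 : c = 0.
  by have := orthant_rigid_le0 H; have := orthant_rigid_le0 Hopp; lra.
by split => //; apply: orthant_rigid0_eq0; rewrite -c0.
Qed.

End OrthantRigidity.

Section AffineForms.
Variables (R : realType) (n : nat) (f : 'rV[R]_n -> R).
Hypothesis f_affine : affine_form f.

Lemma affineZ t v : f (t *: v) = t * f v + (1 - t) * f 0.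
Proof. by have := f_affine v 0 t; rewrite scaler0 addr0. Qed.

Lemma affineD a b : f (a + b) = f a + f b - f 0.
Proof.
have f2 c : f (2 *: c) = 2 * f c - f 0 by rewrite affineZ; ring.
have := f_affine (2 *: a) (2 *: b) 2^-1.
have -> : (1 - 2^-1 : R) = 2^-1 by field.
by rewrite !scalerA mulVf ?pnatr_eq0 // !scale1r => ->; rewrite !f2; field.
Qed.

Lemma affine_addZ a t v : f (a + t *: v) = f a + t * lin_part f v.
Proof. by rewrite affineD affineZ /lin_part; ring. Qed.

Lemma lin_partZ t v : lin_part f (t *: v) = t * lin_part f v.
Proof. by rewrite /lin_part affineZ; ring. Qed.

Lemma affine_add_sum (I : Type) (s : seq I) (r : I -> R) (u : I -> 'rV[R]_n) a :
  f (a + \sum_(i <- s) r i *: u i) = f a + \sum_(i <- s) r i * lin_part f (u i).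
Proof.
elim: s a => [|i s IH] a; first by rewrite !big_nil !addr0.
by rewrite !big_cons addrA IH affine_addZ addrA.
Qed.

Lemma affine_continuous : continuous f.
Proof.
pose c j := lin_part f (delta_mx 0 j).
have -> : f = fun z => f 0 + \sum_(j < n) z 0 j * c j.
  apply: funext => z; rewrite {1}(matrix_sum_delta z) big_ord1.
  by rewrite -[X in f X]add0r affine_add_sum.
have sum_cont (s : seq 'I_n) : continuous (fun z : 'rV[R]_n => \sum_(j <- s) z 0 j * c j).
  elim: s => [|j s IH] z.
    by under eq_fun do rewrite big_nil; apply: cst_continuous.
  under eq_fun do rewrite big_cons.
  apply: (@continuousD _ _ _ (fun z : 'rV[R]_n => z 0 j * c j)); last exact: IH.
  apply: (@continuousM _ _ (fun z : 'rV[R]_n => z 0 j) (fun=> c j)).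
    exact: coord_continuous.
  exact: cst_continuous.
by move=> z; apply: (@continuousD _ _ _ (fun=> f 0)); [apply: cst_continuous|apply: sum_cont].
Qed.

End AffineForms.

Section YaoYaoCells.
Variables (R : realType) (n : nat) (L : 'I_n -> 'rV[R]_n -> R).
Local Notation V := 'rV[R]_n.
Local Notation Borel := (Borel_space R n).
Hypothesis HL : coord_system L.

(* [coord k] is [L k] for [k < n] and junk [0] beyond. *)
Definition coord (k : nat) : V -> R := oapp L (fun=> 0) (insub k).

Lemma coordE (i : 'I_n) : coord i = L i.
Proof. by rewrite /coord valK. Qed.

Lemma coord_affine k : affine_form (coord k).
Proof.
rewrite /coord; case: insubP => [i _ _|_] /=; first by case: HL.
by move=> a b t; ring.
Qed.

(* Walking down the cell of sign pattern [q] of a partition of the flat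
   [F_k] through [x], [cone_proj] removes the components of [z] along the
   directions met so far; [cell_coord ... m z] is the coordinate of [z]
   along the [m]-th direction. *)
Fixpoint cone_proj (x : V) (d : seq bool -> V) (k : nat) (q : nat -> bool)
    (m : nat) (z : V) : V :=
  if m is m'.+1 then
    let w := cone_proj x d k q m' z in
    w - (coord (k + m') w - coord (k + m') x) *: d (prefix q m')
  else z.

Definition cell_coord x d k q m z :=
  coord (k + m) (cone_proj x d k q m z) - coord (k + m) x.

Definition flat (x : V) k (z : V) := forall i : 'I_n, (i < k)%N -> L i z = L i x.

Definition cell x d k q := [set z | flat x k z /\
  forall m, (m < n - k)%N -> signed (q m) (cell_coord x d k q m z)].

(* The direction at node [p] of the binary tree of a Yao-Yao partition of
   [F_k], rescaled so that its coordinate of index [k + size p] is [1]. *)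
Definition adapted_dirs (d : seq bool -> V) k := forall p, (size p + k < n)%N ->
  lin_part (coord (k + size p)) (d p) = 1 /\
  forall i, (i < k + size p)%N -> lin_part (coord i) (d p) = 0.

Definition half_cone b (A : set V) (v : V) :=
  [set z | exists a t, A a /\ signed b t /\ z = a + t *: v].

Lemma cone_projS x d k q m z : cone_proj x d k q m.+1 z =
  let w := cone_proj x d k q m z in
  w - (coord (k + m) w - coord (k + m) x) *: d (prefix q m).
Proof. by []. Qed.

Lemma cone_proj_shift x d k q m z : cone_proj x d k q m.+1 z =
  cone_proj x (fun p => d (q 0%N :: p)) k.+1 (fun t => q t.+1) m
    (z - (coord k z - coord k x) *: d [::]).
Proof.
elim: m => [|m IH]; first by rewrite /= addn0.
rewrite cone_projS IH [RHS]cone_projS /= addSnnS.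
by rewrite -(prefix_cons (q 0%N)); congr (_ - _ *: d _); apply: prefix_eq; case.
Qed.

Lemma cell_coord_shift x d k q m z : cell_coord x d k q m.+1 z =
  cell_coord x (fun p => d (q 0%N :: p)) k.+1 (fun t => q t.+1) m
    (z - (coord k z - coord k x) *: d [::]).
Proof. by rewrite /cell_coord cone_proj_shift addSnnS. Qed.

Lemma cell_coord_0 x d k q z : cell_coord x d k q 0 z = coord k z - coord k x.
Proof. by rewrite /cell_coord addn0. Qed.

Lemma cell_step x d k q : (k < n)%N -> adapted_dirs d k ->
  cell x d k q =
  half_cone (q 0%N) (cell x (fun p => d (q 0%N :: p)) k.+1 (fun t => q t.+1)) (d [::]).
Proof.
move=> kn d_adapted; have [d1 d0] := d_adapted [::] kn.
rewrite addn0 in d1; rewrite /= addn0 in d0.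
have L_affine i : affine_form (L i) by case: HL.
have nkS m : (m.+1 < n - k)%N = (m < n - k.+1)%N.
  by rewrite subnS; case: (n - k)%N.
apply/seteqP; split => z.
- move=> [Fz Hs]; set t := coord k z - coord k x.
  exists (z - t *: d [::]), t; split; last split; last by rewrite subrK.
  + split.
    * move=> i; rewrite ltnS leq_eqVlt => /orP[/eqP ik|ik];
        rewrite -scaleNr affine_addZ // -coordE.
      - by rewrite ik d1 /t; ring.
      - by rewrite d0 // coordE Fz //; ring.
    * by move=> m hm; rewrite -cell_coord_shift; apply: Hs; rewrite nkS.
  + by rewrite /t -(cell_coord_0 x d k q z); apply: Hs; rewrite subn_gt0.
- move=> [a [t [[Fa Ha] [st ->]]]].
  have kS : coord k (a + t *: d [::]) - coord k x = t.
    rewrite (affine_addZ (coord_affine k)) d1.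
    by rewrite (coordE (Ordinal kn)) Fa //; ring.
  split.
  + move=> i ik; rewrite affine_addZ // -coordE d0 // coordE Fa ?(ltn_trans ik) //.
    by ring.
  + case=> [|m] hm; first by rewrite cell_coord_0 kS.
    by rewrite cell_coord_shift kS addrK; apply: Ha; rewrite -nkS.
Qed.

Lemma half_coneZ b A v c : c != 0 ->
  half_cone b A (c^-1 *: v) = half_cone (b == (0 < c)) A v.
Proof.
move=> c0; have cc : c * c^-1 = 1 by rewrite mulfV.
have [c_gt0|c_lt0] : 0 < c \/ c < 0.
  by case: ltrgtP c0 => // h _; [left|right].
all: apply/seteqP; split => z [a [t [Aa [st ->]]]].
all: first [exists a, (t * c^-1); split => //; split; last by rewrite scalerA
          | exists a, (t * c); split => //; split;
              last by rewrite scalerA -mulrA mulfV ?mulr1].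
all: move: st; rewrite /signed; case: b;
  rewrite ?c_gt0 ?(lt_gtF c_lt0) /=; nra.
Qed.

Lemma YYA_cells x k P : YYA L x k P ->
  exists d, adapted_dirs d k /\ forall q, P (cell x d k q).
Proof.
elim=> {k P} [|k v P1 Pm1 v_low v_k _ [d1 [d1_adapted P1_cells]]
                              _ [dm [dm_adapted Pm1_cells]]].
- exists (fun=> 0); split=> [p|q]; first by rewrite ltnNge leq_addl.
  suff -> : cell x (fun=> 0) n q = [set x] by [].
  apply/seteqP; split=> z.
  + move=> [Fz _]; case: HL => _ /bij_inj; apply.
    by apply/rowP => i; rewrite !mxE; apply: Fz.
  + by move=> ->; split => // m; rewrite subnn.
- set c := lin_part (L k) v.
  pose d p := if p is b :: p' then (if b == (0 < c) then d1 p' else dm p')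
              else c^-1 *: v.
  have d_adapted : adapted_dirs d k.
    case=> [|b p] /=.
    + rewrite add0n addn0 => kn; split.
        by rewrite (lin_partZ (coord_affine _)) coordE mulVf.
      move=> i ik; have ikn := ltn_trans ik kn.
      by rewrite (lin_partZ (coord_affine _)) (coordE (Ordinal ikn)) v_low ?mulr0.
    + rewrite addSnnS => hp; rewrite addnS -addSn.
      by case: (b == (0 < c)); [apply: d1_adapted | apply: dm_adapted].
  exists d; split => // q; rewrite cell_step //= half_coneZ //.
  case: (q 0%N == (0 < c)) => /=.
  + by right; exists (cell x d1 k.+1 (fun t => q t.+1)).
  + by left; exists (cell x dm k.+1 (fun t => q t.+1)).
Qed.

Definition sector x d q j := [set z : V |
  forall m, (m < j)%N -> signed (q m) (cell_coord x d 0 q m z)].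

Definition strict_sector x d q j := [set z : V |
  forall m, (m < j)%N -> strictly_signed (q m) (cell_coord x d 0 q m z)].

Lemma cell_sector x d q : cell x d 0 q = sector x d q n.
Proof.
apply/seteqP; split => z; rewrite /cell /sector /= subn0; first by case.
by split => // i; rewrite ltn0.
Qed.

Lemma cell_coord_triangular x d q m z : cell_coord x d 0 q m z =
  coord m z - coord m x -
  \sum_(t < m) cell_coord x d 0 q t z * lin_part (coord m) (d (prefix q t)).
Proof.
rewrite {1}/cell_coord add0n.
suff -> : forall i, coord i (cone_proj x d 0 q m z) = coord i z -
    \sum_(t < m) cell_coord x d 0 q t z * lin_part (coord i) (d (prefix q t)).
  by ring.
move=> i; elim: m => [|m IH]; first by rewrite big_ord0 subr0.
rewrite cone_projS /= -scaleNr (affine_addZ (coord_affine i)) IH big_ord_recr /=.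
by rewrite /cell_coord; ring.
Qed.

Lemma cell_coord_eq x d q q' m z : (forall t, (t < m)%N -> q t = q' t) ->
  cell_coord x d 0 q m z = cell_coord x d 0 q' m z.
Proof.
move=> qq'; rewrite /cell_coord.
suff -> : cone_proj x d 0 q m z = cone_proj x d 0 q' m z by [].
elim: m qq' => [//|m IH] qq'.
have qq'm t : (t < m)%N -> q t = q' t by move=> tm; apply: qq'; rewrite ltnS ltnW.
by rewrite !cone_projS /= IH // (prefix_eq qq'm).
Qed.

Lemma cell_coord_continuous x d q m : continuous (cell_coord x d 0 q m).
Proof.
have coord_cont i : continuous (coord i).
  exact: affine_continuous (coord_affine i).
suff proj_cont : continuous (cone_proj x d 0 q m).
  move=> z; apply: (@continuousB _ _ _ (fun z => coord m (cone_proj x d 0 q m z))).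
    by apply: continuous_comp; [exact: proj_cont | exact: coord_cont].
  exact: cst_continuous.
elim: m => [|m IH] z /=; first exact: cvg_id.
apply: (@continuousB _ _ _ (cone_proj x d 0 q m)); first exact: IH.
apply: (@continuousZr_tmp _ _ _
  (fun z => coord (0 + m) (cone_proj x d 0 q m z) - coord (0 + m) x)).
apply: (@continuousB _ _ _ (fun z => coord (0 + m) (cone_proj x d 0 q m z))).
  by apply: continuous_comp; [exact: IH | exact: coord_cont].
exact: cst_continuous.
Qed.

Lemma sectorS x d q j : sector x d q j.+1 =
  sector x d q j `&` [set z | signed (q j) (cell_coord x d 0 q j z)].
Proof. exact: set_forall_ltS. Qed.

Lemma sector0 x d q : sector x d q 0 = setT.
Proof. exact: set_forall_lt0. Qed.

Lemma sector_closed x d q j : closed (sector x d q j).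
Proof.
elim: j => [|j IH]; first by rewrite sector0; exact: closedT.
rewrite sectorS; apply: closedI => //.
have /continuous_closedP := @cell_coord_continuous x d q j; apply.
by rewrite /signed; case: (q j); [exact: closed_ge | exact: closed_le].
Qed.

Lemma strict_sector_open x d q j : open (strict_sector x d q j).
Proof.
elim: j => [|j IH]; first by rewrite /strict_sector set_forall_lt0; exact: openT.
rewrite /strict_sector set_forall_ltS; apply: openI => //.
have /continuousP := @cell_coord_continuous x d q j; apply.
by rewrite /strictly_signed; case: (q j); [exact: open_gt | exact: open_lt].
Qed.

Lemma open_measurable_Borel (U : set V) : open U -> measurable (U : set Borel).
Proof. by move=> oU; apply: sub_sigma_algebra. Qed.

Lemma closed_measurable_Borel (A : set V) : closed A -> measurable (A : set Borel).
Proof.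
move=> cA; rewrite -(setCK A); apply: measurableC; apply: open_measurable_Borel.
by rewrite openC.
Qed.

Lemma sector_measurable x d q j : measurable (sector x d q j : set Borel).
Proof. exact: closed_measurable_Borel (@sector_closed x d q j). Qed.

Lemma sector_B_first x d q j k (hk : (k <= n)%N) : (j <= k)%N ->
  B_first L hk (sector x d q j).
Proof.
move=> jk; rewrite /B_first /g_sigma_preimage.
under eq_bigr => i _ do rewrite -(coordE (widen_ord hk i)).
set G := \big[setU/set0]_(i < k) _.
suff : measurable (sector x d q j : set (g_sigma_algebraType G)) by [].
have coord_mfun i : (i < k)%N ->
    measurable_fun (setT : set (g_sigma_algebraType G)) (coord i).
  move=> ik _ B mB; apply: sub_sigma_algebra.
  apply: (@bigsetU_sup _ i k (fun i => preimage_set_system setT (coord i) measurable) ik).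
  by exists B.
have cell_mfun m : (m < k)%N ->
    measurable_fun (setT : set (g_sigma_algebraType G)) (cell_coord x d 0 q m).
  elim/ltn_ind: m => m IH mk.
  rewrite (funext (cell_coord_triangular x d q m)).
  apply: measurable_realfun.measurable_funB.
    by apply: measurable_realfun.measurable_funB; [exact: coord_mfun|exact: measurable_cst].
  apply: measurable_sum => t; apply: measurable_realfun.measurable_funM.
    by apply: IH => //; exact: ltn_trans (ltn_ord t) mk.
  exact: measurable_cst.
elim: j jk => [|j IH] jk; first by rewrite sector0; exact: measurableT.
rewrite sectorS; apply: measurableI; first by apply: IH; exact: ltnW.
have := cell_mfun j jk; rewrite /signed; case: (q j) => mj.
- by have := measurable_fun_le measurableT (measurable_cst (0 : R)) mj; rewrite setTI.
- by have := measurable_fun_le measurableT mj (measurable_cst (0 : R)); rewrite setTI.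
Qed.

Definition flip_at (q : nat -> bool) j : nat -> bool :=
  fun t => if t == j then ~~ q j else q t.

Lemma sector_split x d q j :
  sector x d q j `<=` sector x d q j.+1 `|` sector x d (flip_at q j) j.+1.
Proof.
move=> z Hz.
have flipE m : (m <= j)%N ->
    cell_coord x d 0 (flip_at q j) m z = cell_coord x d 0 q m z.
  move=> mj; apply: cell_coord_eq => t tm; rewrite /flip_at.
  by rewrite (ltn_eqF (leq_trans tm mj)).
have [s|ns] := pselect (signed (q j) (cell_coord x d 0 q j z)).
  by left; rewrite sectorS.
right; rewrite sectorS; split.
  move=> m mj; rewrite flipE 1?ltnW // /flip_at (ltn_eqF mj); exact: Hz.
rewrite /= flipE // /flip_at eqxx; move: ns; rewrite /signed.
by case: (q j) => /= ns; apply: ltW; rewrite ltNge; apply/negP.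
Qed.

(* The directions of an adapted tree are triangular with unit diagonal with
   respect to the coordinates, so any values of the first coordinates of a
   cell are attained. *)
Lemma cell_coord_surj x d q j (r : nat -> R) : adapted_dirs d 0 -> (j < n)%N ->
  exists z, forall t, (t <= j)%N -> cell_coord x d 0 q t z = r t.
Proof.
move=> d_adapted jn; exists (x + \sum_(s < j.+1) r s *: d (prefix q s)).
set z := _ + _.
have coord_z t : (t <= j)%N -> coord t z - coord t x =
    \sum_(s < t) r s * lin_part (coord t) (d (prefix q s)) + r t.
  move=> tj; rewrite /z (affine_add_sum (coord_affine t)) addrC addKr.
  rewrite -!(big_mkord xpredT (fun s => r s * lin_part (coord t) (d (prefix q s)))).
  rewrite (@big_cat_nat _ _ _ t 0 j.+1 _ _ (leq0n t) (leqW tj)) /=.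
  rewrite (@big_ltn _ _ _ t j.+1) ?ltnS //.
  have [dt _] := d_adapted (prefix q t) ltac:(by rewrite size_mkseq addn0 (leq_ltn_trans tj)).
  rewrite size_mkseq add0n in dt; rewrite dt mulr1.
  rewrite [X in _ + (_ + X)]big1_seq ?addr0 // => s /=.
  rewrite mem_index_iota => /andP[ts sj].
  have [_ ds] := d_adapted (prefix q s) ltac:(by rewrite size_mkseq addn0 (leq_trans sj)).
  by rewrite size_mkseq add0n in ds; rewrite ds ?mulr0.
move=> t; elim/ltn_ind: t => t IH tj.
rewrite cell_coord_triangular coord_z //.
have -> : \sum_(s < t) cell_coord x d 0 q s z * lin_part (coord t) (d (prefix q s)) =
          \sum_(s < t) r s * lin_part (coord t) (d (prefix q s)).
  by apply: eq_bigr => s _; rewrite IH // (leq_trans (ltnW (ltn_ord s)) tj).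
by rewrite addrAC subrr add0r.
Qed.

Local Notation fmeasure := {finite_measure set Borel -> \bar R}.

Section FiniteMeasure.
Variable mu : fmeasure.

Lemma measure_fine (A : set V) : measurable (A : set Borel) ->
  mu A = (fine (mu A))%:E.
Proof. by move=> mA; rewrite fineK // fin_num_measure. Qed.

Lemma fine_measure_le (A B : set V) : measurable (A : set Borel) ->
  measurable (B : set Borel) -> A `<=` B -> fine (mu A) <= fine (mu B).
Proof.
move=> mA mB AB; rewrite -lee_fin -measure_fine // -measure_fine //.
by apply: le_measure; rewrite ?inE.
Qed.

Lemma fine_measure_subU (A B C : set V) : measurable (A : set Borel) ->
  measurable (B : set Borel) -> measurable (C : set Borel) ->
  A `<=` B `|` C -> fine (mu A) <= fine (mu B) + fine (mu C).
Proof.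
move=> mA mB mC ABC; rewrite -lee_fin EFinD -!measure_fine //.
apply: le_trans (measureU2 _ mB mC).
by apply: le_measure; rewrite ?inE //; apply: measurableU.
Qed.

Lemma Mstar_open_gap (S T O : set V) : in_Mstar mu ->
  measurable (S : set Borel) -> measurable (T : set Borel) -> S `<=` T ->
  fine (mu S) = fine (mu T) -> open O -> O `<=` T `\` S -> O = set0.
Proof.
move=> Mmu mS mT ST mST oO OTS; have [//|/set0P O0] := eqVneq O set0; exfalso.
have mO := open_measurable_Borel oO.
have mTS : measurable (T `\` S : set Borel) by apply: measurableD.
have := Mmu.2 O oO O0; rewrite measure_fine // lte_fin => muO.
have := fine_measure_le mO mTS OTS.
have : fine (mu T) = fine (mu (T `\` S)) + fine (mu S).
  by rewrite (measureDI mu mT mS) setIidr // fineD // fin_num_measure.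
lra.
Qed.

(* Each sector of depth [j] splits into two of depth [j + 1], so subadditivity
   gives upper bounds downwards from the cells and then lower bounds upwards
   from the whole space. *)
Lemma sector_mass x d :
  (forall q, mu (sector x d q n) = ((2 ^- n)%:E * mu setT)%E) ->
  forall j q, (j <= n)%N -> fine (mu (sector x d q j)) = 2 ^- j * fine (mu setT).
Proof.
move=> cell_mass.
have cell_massR q : fine (mu (sector x d q n)) = 2 ^- n * fine (mu setT).
  by rewrite cell_mass (measure_fine measurableT).
have pow2S j : (2 ^- j : R) = 2 * 2 ^- j.+1.
  by rewrite exprS invfM mulrA mulfV ?mul1r ?pnatr_eq0.
have split_mass j q := fine_measure_subU (sector_measurable x d q j)
  (sector_measurable x d q j.+1) (sector_measurable x d (flip_at q j) j.+1)
  (@sector_split x d q j).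
have up i j q : (j + i = n)%N -> fine (mu (sector x d q j)) <= 2 ^- j * fine (mu setT).
  elim: i j q => [|i IH] j q ji.
    by rewrite addn0 in ji; rewrite ji cell_massR.
  have j1 : (j.+1 + i = n)%N by rewrite addSnnS.
  have := split_mass j q; have := IH _ q j1; have := IH _ (flip_at q j) j1.
  by rewrite (pow2S j); lra.
have low j q : (j <= n)%N -> 2 ^- j * fine (mu setT) <= fine (mu (sector x d q j)).
  elim: j q => [|j IH] q jn; first by rewrite sector0 expr0 invr1 mul1r.
  have := split_mass j q; have := IH q (ltnW jn).
  have := up (n - j.+1)%N j.+1 (flip_at q j) (subnKC jn).
  by rewrite (pow2S j); lra.
move=> j q jn; apply/eqP; rewrite eq_le low // andbT.
by apply: (up (n - j)%N); rewrite subnKC.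
Qed.

End FiniteMeasure.

Lemma center_sectors (mu : fmeasure) x : is_center mu L x ->
  exists d, adapted_dirs d 0 /\ forall j q, (j <= n)%N ->
    fine (mu (sector x d q j)) = 2 ^- j * fine (mu setT).
Proof.
move=> [P [P_adapted P_equi]]; have [d [d_adapted P_cells]] := YYA_cells P_adapted.
exists d; split => //; apply: sector_mass => q.
by rewrite -cell_sector; apply: P_equi.
Qed.

Definition centers_agree x y (dx dy : seq bool -> V) j := forall i, (i < j)%N ->
  coord i x = coord i y /\
  forall p, (size p < i)%N -> lin_part (coord i) (dx p) = lin_part (coord i) (dy p).

Lemma centers_agree_sym x y dx dy j :
  centers_agree x y dx dy j -> centers_agree y x dy dx j.
Proof.
move=> agree i /agree [xy dxy]; split=> // p /dxy dp.
by rewrite dp.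
Qed.

Lemma centers_agree_cell_coord x y dx dy j q z : centers_agree x y dx dy j ->
  forall i, (i < j)%N -> cell_coord x dx 0 q i z = cell_coord y dy 0 q i z.
Proof.
move=> agree i; elim/ltn_ind: i => i IH ij.
have [xy dxy] := agree i ij.
rewrite !cell_coord_triangular xy; congr (_ - _); apply: eq_bigr => t _.
by rewrite IH ?(ltn_trans _ ij) // dxy // size_mkseq.
Qed.

Lemma centers_agree_sector x y dx dy j q : centers_agree x y dx dy j ->
  sector x dx q j = sector y dy q j.
Proof.
move=> agree; apply/seteqP; split => z H m mj.
  by rewrite -(centers_agree_cell_coord _ _ agree mj); apply: H.
by rewrite (centers_agree_cell_coord _ _ agree mj); apply: H.
Qed.

Lemma centers_agree_cell_coord_diff x y dx dy j q z : centers_agree x y dx dy j ->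
  cell_coord x dx 0 q j z - cell_coord y dy 0 q j z =
  coord j y - coord j x +
  orthant_sum j (fun p => lin_part (coord j) (dy p) - lin_part (coord j) (dx p))
    q (fun t => cell_coord x dx 0 q t z).
Proof.
move=> agree; rewrite !cell_coord_triangular /orthant_sum.
have -> : \sum_(t < j) cell_coord y dy 0 q t z * lin_part (coord j) (dy (prefix q t)) =
          \sum_(t < j) cell_coord x dx 0 q t z * lin_part (coord j) (dy (prefix q t)).
  by apply: eq_bigr => t _; rewrite (centers_agree_cell_coord _ _ agree (ltn_ord t)).
rewrite [X in _ = _ + X](eq_bigr _ (fun t _ => mulrBr _ _ _)) sumrB.
by ring.
Qed.

Lemma strict_sector_sub x d q j : strict_sector x d q j `<=` sector x d q j.
Proof.
by move=> z H m /H; rewrite /strictly_signed /signed; case: (q m) => /ltW.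
Qed.

(* Equal masses of nested sectors leave no room for an open set between them. *)
Lemma sector_no_gap (mu : fmeasure) x y dx dy j q : in_Mstar mu ->
  sector x dx q j = sector y dy q j ->
  (forall w, sector x dx q j w ->
     cell_coord y dy 0 q j w <= cell_coord x dx 0 q j w) ->
  fine (mu (sector y dy q j.+1)) = fine (mu (sector x dx q j.+1)) ->
  forall z, strict_sector x dx q j z -> cell_coord y dy 0 q j z < 0 ->
    cell_coord x dx 0 q j z <= 0.
Proof.
move=> Mmu xy_sector gap mass z Sz zy; rewrite leNgt; apply/negP => zx.
pose O := strict_sector x dx q j `&`
  (cell_coord y dy 0 q j @^-1` `]-oo, 0[ `&` cell_coord x dx 0 q j @^-1` `]0, +oo[).
have oO : open O.
  apply: openI; first exact: strict_sector_open.
  apply: openI; apply: open_comp; rewrite ?interval_open // => w _;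
    exact: cell_coord_continuous.
have zO : O z by split=> //; rewrite /= !in_itv /= andbT.
have Ow w : O w -> [/\ sector x dx q j w, sector y dy q j w,
    cell_coord y dy 0 q j w < 0 & 0 < cell_coord x dx 0 q j w].
  move=> [/strict_sector_sub Sw]; rewrite /= !in_itv /= andbT => -[wy wx].
  by split; rewrite -?xy_sector.
suff O0 : O = set0 by rewrite O0 in zO.
case qj : (q j).
- apply: (Mstar_open_gap Mmu (sector_measurable y dy q j.+1)
    (sector_measurable x dx q j.+1) _ mass oO).
  + move=> w; rewrite !sectorS /= qj /signed -xy_sector => -[Sw wy].
    by split=> //; have := gap w Sw; lra.
  + move=> w /Ow[Sxw Syw wy wx]; rewrite !sectorS /= qj /signed.
    by split; [split=> //; apply: ltW | move=> -[_]; lra].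
- apply: (Mstar_open_gap Mmu (sector_measurable x dx q j.+1)
    (sector_measurable y dy q j.+1) _ (esym mass) oO).
  + move=> w; rewrite !sectorS /= qj /signed => -[Sw wx].
    by rewrite -xy_sector; split=> //; have := gap w Sw; lra.
  + move=> w /Ow[Sxw Syw wy wx]; rewrite !sectorS /= qj /signed.
    by split; [split=> //; apply: ltW | move=> -[_]; lra].
Qed.

(* The difference of the [j]-th cell coordinates of [x] and [y] is the affine
   map of [orthant_rigid]; a point of the open orthant where it is positive
   contradicts [sector_no_gap]. *)
Lemma center_step (mu : fmeasure) x y dx dy j :
  adapted_dirs dx 0 -> in_Mstar mu -> (j < n)%N -> centers_agree x y dx dy j ->
  (forall q, fine (mu (sector y dy q j.+1)) = fine (mu (sector x dx q j.+1))) ->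
  orthant_rigid j (coord j y - coord j x)
    (fun p => lin_part (coord j) (dy p) - lin_part (coord j) (dx p)).
Proof.
move=> dx_adapted Mmu jn agree mass q Hpos r r_strict.
set e := fun p => _; set D := _ + _; rewrite leNgt; apply/negP => D_gt0.
have [z zr] := cell_coord_surj x q (fun t => if t == j then D / 2 else r t)
  dx_adapted jn.
have zr_lt t : (t < j)%N -> cell_coord x dx 0 q t z = r t.
  by move=> tj; rewrite zr ?(ltnW tj) // (ltn_eqF tj).
have zx : cell_coord x dx 0 q j z = D / 2 by rewrite zr // eqxx.
have zy : cell_coord y dy 0 q j z = - (D / 2).
  have := centers_agree_cell_coord_diff q z agree.
  by rewrite (eq_orthant_sum _ _ zr_lt) -/e -/D zx; lra.
have gap w : sector x dx q j w ->
    cell_coord y dy 0 q j w <= cell_coord x dx 0 q j w.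
  by move=> Sw; have := Hpos _ Sw; rewrite -centers_agree_cell_coord_diff //; lra.
have Sz : strict_sector x dx q j z.
  by move=> t tj; rewrite zr_lt //; apply: r_strict.
have := sector_no_gap Mmu (centers_agree_sector q agree) gap (mass q) Sz.
by rewrite zx zy; lra.
Qed.

Lemma centers_first_coords k (hk : (k <= n)%N) (mu nu : fmeasure) x y :
  in_Mstar mu -> in_Mstar nu -> (forall A, B_first L hk A -> mu A = nu A) ->
  is_center mu L x -> is_center nu L y -> forall i, (i < k)%N -> coord i x = coord i y.
Proof.
move=> Mmu Mnu mu_nu /center_sectors [dx [dx_adapted x_mass]].
move=> /center_sectors [dy [dy_adapted y_mass]].
have mass j q : (j < k)%N ->
    fine (mu (sector y dy q j.+1)) = fine (mu (sector x dx q j.+1)) /\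
    fine (nu (sector x dx q j.+1)) = fine (nu (sector y dy q j.+1)).
  move=> jk; have jn := leq_trans jk hk.
  have total : mu setT = nu setT.
    by rewrite -(sector0 x dx (fun=> true)); apply/mu_nu/sector_B_first.
  have Bx : B_first L hk (sector x dx q j.+1) := sector_B_first x dx q jk.
  have By : B_first L hk (sector y dy q j.+1) := sector_B_first y dy q jk.
  split; first by rewrite (mu_nu _ By) y_mass // x_mass // total.
  by rewrite -(mu_nu _ Bx) x_mass // y_mass // total.
suff agree j : (j <= k)%N -> centers_agree x y dx dy j.
  by move=> i ik; have [] := agree k (leqnn k) i ik.
elim: j => [_ i|j IH jk]; first by rewrite ltn0.
have {}IH := IH (ltnW jk); have jn := leq_trans jk hk.
have := center_step dx_adapted Mmu jn IH (fun q => (mass j q jk).1).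
have := center_step dy_adapted Mnu jn (centers_agree_sym IH)
  (fun q => (mass j q jk).2).
rewrite -[coord j x - _]opprB.
under [X in orthant_rigid _ _ X]funext => p do rewrite -opprB.
move=> /[swap] /orthant_rigid_opp /[apply] -[c0 e0] i.
rewrite ltnS leq_eqVlt => /orP[/eqP -> | /IH //]; split; first lra.
by move=> p /e0; lra.
Qed.

End YaoYaoCells.

Unset Implicit Arguments.
Set Strict Implicit.

Theorem proposition10 (R : realType) (n : nat) (L : 'I_n -> 'rV[R]_n -> R) :
  coord_system L ->
  (forall (mu : {finite_measure set Borel_space R n -> \bar R}) (x y : 'rV[R]_n),
      in_Mstar mu -> is_center mu L x -> is_center mu L y -> x = y) /\
  (forall (k : nat) (hk1 : (1 <= k)%N) (hk : (k <= n)%N)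
          (mu nu : {finite_measure set Borel_space R n -> \bar R})
          (x y : 'rV[R]_n),
      in_Mstar mu -> in_Mstar nu ->
      (forall A, B_first L hk A -> mu A = nu A) ->
      is_center mu L x -> is_center nu L y ->
      forall i : 'I_n, (i < k)%N -> L i x = L i y).
Proof.
move=> HL; split.
- move=> mu x y Mmu Cx Cy; case: (HL) => _ /bij_inj; apply; apply/rowP => i.
  rewrite !mxE -!(coordE L).
  exact: (centers_first_coords HL (hk:=leqnn n) Mmu Mmu (fun _ _ => erefl) Cx Cy
    (ltn_ord i)).
- move=> k _ hk mu nu x y Mmu Mnu mu_nu Cx Cy i ik; rewrite -!(coordE L).
  exact: (centers_first_coords HL (hk:=hk) Mmu Mnu mu_nu Cx Cy ik).
Qed.
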